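(* Let $q=2$ and let $\mathcal{A}=(\mathbb{G}_a^2,\Phi)$ be the $T$-module defined by \[\Phi(T)=TI_2+\begin{pmatrix}0&0\\1&0\end{pmatrix}\tau.\] Then $\mathcal{A}$ is not abelian.
   Context: $A=\mathbb{F}_2[T]$, $k=\mathbb{F}_2(T)$, $\tau$ the Frobenius $z\mapsto z^2$ acting coordinatewise, with $\tau M=M^{(2)}\tau$ for matrices. $\mathrm{Hom}_k(\mathcal{A},\mathbb{G}_a)$, the $\mathbb{F}_2$-linear algebraic group homomorphisms $\mathbb{G}_a^2\to\mathbb{G}_a$ defined over $k$, is identified with $k\{\tau\}^2$ and made into a $k[T]$-module by letting $k$ act by left multiplication and $T\cdot f=f\circ\Phi(T)$. $\mathcal{A}$ is abelian if this $k[T]$-module has finite rank (equivalently here, is finitely generated). *)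

From HB Require Import structures.
From mathcomp Require Import all_boot all_order all_algebra fraction.
Set Implicit Arguments. Unset Strict Implicit. Unset Printing Implicit Defensive.
Import GRing.Theory.
Local Open Scope ring_scope.

Definition kF := {fraction {poly 'F_2}}.
Definition Tk : kF := @FracField.tofrac {poly 'F_2} 'X.

(* Twisted polynomials k{tau}: an element sum_i a_i tau^i is represented by
   its (canonical, trailing-zero-free) coefficient list, stored as a {poly kF}
   whose i-th coefficient is a_i.  Only the additive structure and the scalar
   action of {poly kF} are used; the ring structure of k{tau} is [tmul]. *)
Definition twpoly := {poly kF}.

(* Twisted product, with tau c = c^2 tau (q = 2):
   (a tau^i)(b tau^j) = a b^(2^i) tau^(i+j). *)
Definition tmul (p q : twpoly) : twpoly :=
  \sum_(i < size p) \sum_(j < size q) ((p`_i * q`_j ^+ (2 ^ i)) *: 'X^(i + j)).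

(* Phi(T) = T I_2 + [[0,0],[1,0]] tau, as a 2x2 matrix over k{tau}
   (entries indexed by 'I_2, row index first). *)
Definition PhiT (i j : 'I_2) : twpoly :=
  (if i == j then Tk%:P else 0) +
  (if (nat_of_ord i == 1%N) && (nat_of_ord j == 0%N) then 'X else 0).

(* Hom_k(A, G_a) = k{tau}^2: f = (f_0, f_1) acts by (x_0,x_1) |-> f_0(x_0)+f_1(x_1). *)
Definition HomA := 'rV[twpoly]_2.

(* T . f = f o Phi(T), i.e. (f o Phi(T))_i = sum_j f_j Phi(T)_{j i}. *)
Definition Tact (f : HomA) : HomA :=
  \row_i \sum_j tmul (f 0 j) (PhiT j i).

Definition kact (c : kF) (f : HomA) : HomA := map_mx (fun p => c *: p) f.

Definition pact (P : {poly kF}) (f : HomA) : HomA :=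
  \sum_(n < size P) kact P`_n (iter n Tact f).

(* A is abelian iff Hom_k(A, G_a) is a finitely generated k[T]-module. *)
Definition is_abelian : Prop :=
  exists (n : nat) (g : 'I_n -> HomA),
    forall f : HomA, exists c : 'I_n -> {poly kF},
      f = \sum_(j < n) pact (c j) (g j).

From mathcomp Require Import all_boot all_order all_algebra fraction.
From mathcomp Require Import zify.
Import GRing.Theory.
Local Open Scope ring_scope.

(* Along the column of the second coordinate, Phi(T) is just multiplication by
   T on the right, so the action of k[T] never raises the tau-degree of the
   second coordinate of f in Hom_k(A, G_a).  A finite family of generators thus
   bounds that degree on the whole submodule it generates, while
   (tau^B, tau^B) escapes every bound B. *)

Lemma size_sum_leq (R : nzSemiRingType) (I : Type) (r : seq I) (P : pred I)
    (F : I -> {poly R}) (B : nat) :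
  (forall i, P i -> size (F i) <= B)%N -> (size (\sum_(i <- r | P i) F i)%R <= B)%N.
Proof.
move=> leFB; apply: (big_ind (fun p : {poly R} => size p <= B)%N) => //.
- by rewrite size_poly0.
- by move=> p q lepB leqB; rewrite (leq_trans (size_polyD _ _)) // geq_max lepB.
Qed.

Lemma size_tmul (p q : twpoly) : (size (tmul p q) <= (size p + size q).-1)%N.
Proof.
apply: size_sum_leq => i _; apply: size_sum_leq => j _.
apply: leq_trans (size_scale_leq _ _) _.
rewrite size_polyXn.
have := ltn_ord i; have := ltn_ord j; lia.
Qed.

Lemma size_tmulC (p : twpoly) (c : kF) : (size (tmul p c%:P) <= size p)%N.
Proof.
apply: leq_trans (size_tmul _ _) _.
by rewrite -subn1 leq_subLR addnC leq_add2r size_polyC_leq1.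
Qed.

Lemma tmul0 (p : twpoly) : tmul p 0 = 0.
Proof. by apply: big1 => i _; rewrite size_poly0 big_ord0. Qed.

Lemma PhiT_0max : PhiT ord0 ord_max = 0.
Proof. by rewrite /PhiT /= addr0. Qed.

Lemma PhiT_maxmax : PhiT ord_max ord_max = Tk%:P.
Proof. by rewrite /PhiT /= addr0. Qed.

Lemma Tact_second (f : HomA) : Tact f ord0 ord_max = tmul (f ord0 ord_max) Tk%:P.
Proof.
rewrite mxE big_ord_recl big_ord1 PhiT_0max tmul0 add0r.
by congr tmul; [congr (f _ _)|rewrite -PhiT_maxmax]; apply: val_inj.
Qed.

Definition second_size_le (B : nat) (f : HomA) : Prop := (size (f ord0 ord_max) <= B)%N.

Section SecondSizeBound.

Variable B : nat.

Lemma second_size_le0 : second_size_le B 0.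
Proof. by rewrite /second_size_le mxE size_poly0. Qed.

Lemma second_size_leD f g :
  second_size_le B f -> second_size_le B g -> second_size_le B (f + g).
Proof.
rewrite /second_size_le mxE => lefB legB.
by rewrite (leq_trans (size_polyD _ _)) // geq_max lefB.
Qed.

Lemma second_size_le_sum (I : Type) (r : seq I) (F : I -> HomA) :
  (forall i, second_size_le B (F i)) -> second_size_le B (\sum_(i <- r) F i).
Proof.
move=> leFB; apply: (big_ind (second_size_le B)) => //.
- exact: second_size_le0.
- exact: second_size_leD.
Qed.

Lemma second_size_le_kact c f : second_size_le B f -> second_size_le B (kact c f).
Proof. by rewrite /second_size_le mxE; apply: leq_trans (size_scale_leq _ _). Qed.

Lemma second_size_le_Tact f : second_size_le B f -> second_size_le B (Tact f).
Proof. by rewrite /second_size_le Tact_second; apply: leq_trans (size_tmulC _ _). Qed.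

Lemma second_size_le_pact P f : second_size_le B f -> second_size_le B (pact P f).
Proof.
move=> lefB; apply: second_size_le_sum => n; apply: second_size_le_kact.
by elim: (nat_of_ord n) => //= m; apply: second_size_le_Tact.
Qed.

End SecondSizeBound.

Theorem proposition7 : ~ is_abelian.
Proof.
case=> n [g gen].
pose B := (\max_(j < n) size (g j ord0 ord_max))%N.
have leB j : second_size_le B (g j) by exact: (leq_bigmax j).
have [c gen_tauB] := gen (const_mx 'X^B).
have : second_size_le B (const_mx 'X^B).
  by rewrite gen_tauB; apply: second_size_le_sum => j; apply/second_size_le_pact/leB.
by rewrite /second_size_le mxE size_polyXn ltnn.
Qed.
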